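(* Let $\mathcal{X}$ be a non-empty set, $\mathcal{B}\subseteq\mathcal{P}(\mathcal{X})\setminus\{\emptyset\}$ and $g\in\mathcal{G}_{\geq0}(\mathcal{X})$. If, for every non-negative rational $r$, the set $\{x\in\mathcal{X}\colon g(x)\geq r\}$ is a finite union of pairwise disjoint events in $\mathcal{B}\cup\{\mathcal{X},\emptyset\}$, then $g$ is $\mathcal{B}$-measurable.
   Context: $\mathcal{G}_{\geq0}(\mathcal{X})$ is the set of bounded non-negative real functions on $\mathcal{X}$; $\mathbb{I}_B$ is the indicator of $B$. A function $g\in\mathcal{G}_{\geq0}(\mathcal{X})$ is simple $\mathcal{B}$-measurable if there are $c_0\geq0$, $n\in\mathbb{N}\cup\{0\}$ and, for $k=1,\dots,n$, $c_k\geq0$ and $B_k\in\mathcal{B}$ with $g=c_0+\sum_{k=1}^nc_k\mathbb{I}_{B_k}$. A function $g\in\mathcal{G}_{\geq0}(\mathcal{X})$ is $\mathcal{B}$-measurable if there is a sequence $(g_n)_{n\in\mathbb{N}}$ of simple $\mathcal{B}$-measurable functions in $\mathcal{G}_{\geq0}(\mathcal{X})$ with $\lim_{n\to\infty}\sup_{x}|g(x)-g_n(x)|=0$. *)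

From HB Require Import structures.
From mathcomp Require Import all_boot all_order all_algebra.
From mathcomp Require Import all_classical all_reals all_analysis.
Set Implicit Arguments. Unset Strict Implicit. Unset Printing Implicit Defensive.
Import Order.TTheory GRing.Theory Num.Theory.
Import numFieldNormedType.Exports.
Local Open Scope classical_set_scope.
Local Open Scope ring_scope.

(* G_{>=0}(X): bounded non-negative real functions on X. *)
Definition bnn (R : realType) (X : Type) (g : X -> R) : Prop :=
  (forall x, 0 <= g x) /\ (exists M : R, forall x, g x <= M).

Definition simple_meas (R : realType) (X : Type) (B : set (set X)) (g : X -> R) : Prop :=
  bnn g /\
  exists (c0 : R) (n : nat) (c : 'I_n -> R) (Bk : 'I_n -> set X),
    0 <= c0 /\ (forall k, 0 <= c k) /\ (forall k, B (Bk k)) /\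
    g = (fun x => c0 + \sum_(k < n) c k * \1_(Bk k) x).

Definition B_meas (R : realType) (X : Type) (B : set (set X)) (g : X -> R) : Prop :=
  bnn g /\
  exists gn : nat -> X -> R,
    (forall n, simple_meas B (gn n)) /\
    (fun n => sup [set `|g x - gn n x| | x in [set: X]]) @ \oo --> (0 : R).

From HB Require Import structures.
From mathcomp Require Import all_boot all_order all_algebra.
From mathcomp Require Import all_classical all_reals all_analysis.
Import Order.TTheory GRing.Theory Num.Theory.
Import numFieldNormedType.Exports.
Local Open Scope classical_set_scope.
Local Open Scope ring_scope.
Set Implicit Arguments. Unset Strict Implicit.

(* If K bounds g, the staircase g_m := truncn((m+1) g) / (m+1) equals
   (m+1)^-1 * \sum_(j < (m+1) K) 1_{g >= (j+1)/(m+1)}.  Each level set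
   {g >= q}, q rational, is a disjoint union of sets in B ∪ {X, ∅}, so its
   indicator is the sum of their indicators; hence g_m is simple, and
   sup_x |g x - g_m x| <= 1/(m+1). *)

Section nonneg_simple.
Variables (R : numDomainType) (X : Type) (B : set (set X)).

Definition nonneg_simple (f : X -> R) :=
  exists (c0 : R) (n : nat) (c : 'I_n -> R) (Bk : 'I_n -> set X),
    0 <= c0 /\ (forall k, 0 <= c k) /\ (forall k, B (Bk k)) /\
    f = (fun x => c0 + \sum_(k < n) c k * \1_(Bk k) x).

Lemma nonneg_simple_cst (c : R) : 0 <= c -> nonneg_simple (fun _ => c).
Proof.
move=> c_ge0; exists c, 0%N, (fun _ => 0), (fun _ => set0).
do !split => //; try by case.
by apply/funext => x; rewrite big_ord0 addr0.
Qed.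

Lemma nonneg_simpleD (f h : X -> R) :
  nonneg_simple f -> nonneg_simple h -> nonneg_simple (fun x => f x + h x).
Proof.
move=> [c0 [n1 [c1 [B1 [c0_ge0 [c1_ge0 [B1B ->]]]]]]].
move=> [d0 [n2 [d1 [B2 [d0_ge0 [d1_ge0 [B2B ->]]]]]]].
pose c k := match fintype.split k with inl i => c1 i | inr j => d1 j end.
pose Bk k := match fintype.split k with inl i => B1 i | inr j => B2 j end.
exists (c0 + d0), (n1 + n2)%N, c, Bk; split; first exact: addr_ge0.
split; first by move=> k; rewrite /c; case: fintype.split.
split; first by move=> k; rewrite /Bk; case: fintype.split.
apply/funext => x; rewrite big_split_ord addrACA.
congr (_ + (_ + _)); apply: eq_bigr => i _.
  by rewrite /c /Bk (unsplitK (inl i)).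
by rewrite /c /Bk (unsplitK (inr i)).
Qed.

Lemma nonneg_simpleZ (a : R) (f : X -> R) :
  0 <= a -> nonneg_simple f -> nonneg_simple (fun x => a * f x).
Proof.
move=> a_ge0 [c0 [n [c [Bk [c0_ge0 [c_ge0 [BkB ->]]]]]]].
exists (a * c0), n, (fun k => a * c k), Bk.
do !split => //; first exact: mulr_ge0.
  by move=> k; apply: mulr_ge0.
by apply/funext => x; rewrite mulrDr mulr_sumr; under eq_bigr do rewrite mulrA.
Qed.

Lemma nonneg_simple_sum n (F : 'I_n -> X -> R) :
  (forall i, nonneg_simple (F i)) -> nonneg_simple (fun x => \sum_(i < n) F i x).
Proof.
elim: n F => [|n IH] F FS.
  by under eq_fun do rewrite big_ord0; exact: nonneg_simple_cst.
under eq_fun do rewrite big_ord_recr /=.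
by apply: nonneg_simpleD => //; apply: (IH (fun i => F (widen_ord (leqnSn n) i))).
Qed.

Lemma nonneg_simple_indic (A : set X) :
  B A \/ A = [set: X] \/ A = set0 -> nonneg_simple \1_A.
Proof.
case=> [BA|[->|->]]; last 2 first.
- by rewrite indicT; exact: nonneg_simple_cst.
- by rewrite indic0; exact: nonneg_simple_cst.
exists 0, 1%N, (fun _ => 1), (fun _ => A); do !split => //.
by apply/funext => x; rewrite big_ord1 add0r mul1r.
Qed.

End nonneg_simple.

Lemma nonneg_simple_meas (R : realType) (X : Type) (B : set (set X)) (f : X -> R) :
  nonneg_simple B f -> simple_meas B f.
Proof.
move=> fS; split=> //; case: fS => [c0 [n [c [Bk [c0_ge0 [c_ge0 [_ ->]]]]]]].
split=> [x|]; first by rewrite addr_ge0 ?sumr_ge0 // => k _; rewrite mulr_ge0.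
exists (c0 + \sum_(k < n) c k) => x; rewrite lerD2l; apply: ler_sum => k _.
by rewrite indicE; case: (_ \in _); rewrite ?mulr1 ?mulr0.
Qed.

Lemma indic_bigcup_disjoint (R : pzRingType) (X : Type) n (A : 'I_n -> set X) :
  (forall i j, i != j -> A i `&` A j = set0) ->
  \1_(\bigcup_(k in [set: 'I_n]) A k) = (fun x => \sum_(k < n) \1_(A k) x) :> (X -> R).
Proof.
move=> Adisj; apply/funext => x.
have [[i _ Aix]|Ax] := pselect ((\bigcup_(k in [set: 'I_n]) A k) x); last first.
  rewrite indicE memNset // big1 // => j _.
  by rewrite indicE memNset // => Ajx; apply: Ax; exists j.
rewrite indicE mem_set; last by exists i.
rewrite (bigD1 i) //= indicE mem_set // big1 ?addr0 // => j ji.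
rewrite indicE memNset //= => Ajx.
have : (A i `&` A j) x by [].
by rewrite Adisj // eq_sym.
Qed.

Lemma nonneg_simple_indic_partition (R : numDomainType) (X : Type) (B : set (set X))
    n (A : 'I_n -> set X) :
  (forall k, B (A k) \/ A k = [set: X] \/ A k = set0) ->
  (forall i j, i != j -> A i `&` A j = set0) ->
  nonneg_simple B (\1_(\bigcup_(k in [set: 'I_n]) A k) : X -> R).
Proof.
move=> AB Adisj; rewrite indic_bigcup_disjoint //.
by apply: nonneg_simple_sum => k; apply: nonneg_simple_indic.
Qed.

Lemma sumr_ord_ltn (R : pzSemiRingType) (N k : nat) : (k <= N)%N ->
  \sum_(j < N) ((j < k)%N%:R : R) = k%:R.
Proof.
move=> kN; rewrite -natr_sum -big_mkcond /=.
rewrite -(big_ord_widen_cond N (fun _ => true) (fun=> 1%N)) //=.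
by rewrite sum1_card card_ord.
Qed.

Lemma sum_levels_truncn (R : archiFieldType) (t : R) (p N : nat) :
  (0 < p)%N -> 0 <= t -> t * p%:R < N%:R ->
  \sum_(j < N) ((j.+1%:R / p%:R <= t :> R)%:R : R) = (Num.truncn (t * p%:R))%:R.
Proof.
move=> p_gt0 t_ge0 tN; rewrite -(@sumr_ord_ltn _ N (Num.truncn (t * p%:R))).
  by apply: eq_bigr => j _; rewrite truncn_gt_nat ler_pdivrMr // ltr0n.
by apply/ltnW; rewrite truncn_lt_nat // mulr_ge0.
Qed.

Lemma dist_truncn_div (R : archiFieldType) (t : R) (p : nat) : (0 < p)%N -> 0 <= t ->
  `|t - (Num.truncn (t * p%:R))%:R / p%:R| <= p%:R^-1.
Proof.
move=> p_gt0 t_ge0; have p_gt0' : (0 : R) < p%:R by rewrite ltr0n.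
have /andP[lo hi] := truncn_itv (mulr_ge0 t_ge0 (ler0n _ p)).
rewrite ger0_norm; last by rewrite subr_ge0 ler_pdivrMr.
rewrite -[leRHS]div1r ler_pdivlMr // mulrBl divfK ?gt_eqF //.
by rewrite lerBlDl natr1 ltW.
Qed.

Lemma sup_norm_cvg0 (R : realType) (X : Type) (f : nat -> X -> R) (e : nat -> R) :
  inhabited X -> (forall n x, `|f n x| <= e n) -> e @ \oo --> 0 ->
  (fun n => sup [set `|f n x| | x in [set: X]]) @ \oo --> 0.
Proof.
move=> [x0] fe e0; apply: (squeeze_cvgr _ (cvg_cst 0) e0); apply: nearW => n.
have ne : [set `|f n x| | x in [set: X]] !=set0 by exists `|f n x0|, x0.
apply/andP; split; last by apply: ge_sup => // _ [x _ <-].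
apply: (le_trans (normr_ge0 (f n x0))); apply: sup_upper_bound; last by exists x0.
by split => //; exists (e n) => _ [x _ <-].
Qed.

Theorem proposition4 (R : realType) (X : Type) (B : set (set X)) (g : X -> R) :
  inhabited X ->
  ~ B set0 ->
  bnn g ->
  (forall r : rat, 0 <= r ->
     exists (n : nat) (A : 'I_n -> set X),
       (forall k, B (A k) \/ A k = [set: X] \/ A k = set0) /\
       (forall i j, i != j -> A i `&` A j = set0) /\
       [set x | ratr r <= g x] = \bigcup_(k in [set: 'I_n]) A k) ->
  B_meas B g.
Proof.
move=> X_inh _ g_bnn g_levels; split => //.
have [g_ge0 [M gM]] := g_bnn.
pose K := (Num.truncn M).+1.
have g_ltK x : g x < K%:R by exact: le_lt_trans (gM x) (truncnS_gt M).
pose L m j := [set x | j.+1%:R / m.+1%:R <= g x].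
have LS m j : nonneg_simple B (\1_(L m j) : X -> R).
  have q_ge0 : (0 : rat) <= j.+1%:R / m.+1%:R by rewrite divr_ge0.
  have [n [A [AB [Adisj LE]]]] := g_levels _ q_ge0.
  rewrite /L -(ratr_nat R j.+1) -(ratr_nat R m.+1) -fmorph_div LE.
  exact: nonneg_simple_indic_partition.
pose gn m x : R := \sum_(j < m.+1 * K) m.+1%:R^-1 * \1_(L m j) x.
exists gn; split.
  move=> m; apply: nonneg_simple_meas; apply: nonneg_simple_sum => j.
  exact: nonneg_simpleZ.
apply: (sup_norm_cvg0 X_inh _ cvg_harmonic) => m x.
have gxmK : g x * m.+1%:R < (m.+1 * K)%:R by rewrite natrM mulrC ltr_pM2l.
have -> : gn m x = (Num.truncn (g x * m.+1%:R))%:R / m.+1%:R.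
  rewrite /gn -mulr_sumr mulrC -(sum_levels_truncn _ (g_ge0 x) gxmK) //.
  congr (_ * _); apply: eq_bigr => j _; rewrite indicE.
  by congr (nat_of_bool _)%:R; apply/idP/idP => [/set_mem|/mem_set].
exact: dist_truncn_div.
Qed.
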